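(* On $\ell^2$ (real square-summable sequences, with canonical Hilbert basis $e_1,e_2,\dots$) define for $n=0,1,2,\dots$ the operator $A_n$ with domain $D(A_n)=\{(x_j)_{j\ge1}\in\ell^2:\sum_j j^2|x_j|^2<\infty\}$ by $A_ne_j=je_j$ for $j\neq n$ and $A_ne_n=-ne_n$ (so $A_0e_j=je_j$ for all $j$). Then each $A_n\in\mathcal S$, $\gamma(A_n,A_0)\to0$, but $\rho(A_n,A_0)\not\to 0$; more precisely, for any $\alpha\in\mathcal A$ with $\alpha(\lambda)=1$ for $\lambda$ sufficiently large and $\alpha(\lambda)=0$ for $\lambda$ sufficiently negative, $\|\alpha(A_n)-\alpha(A_0)\|=1$ for all sufficiently large $n$. In particular the identity map $(\mathcal S,\gamma)\to(\mathcal S,\rho)$ is not continuous.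
   Context: $\mathcal S$ denotes the set of densely defined selfadjoint operators on a separable real Hilbert space (operators extended complex-linearly to the complexification when needed). Riesz map $\Psi(A)=A(1+A^2)^{-1/2}$, Riesz metric $\rho(A_0,A_1)=\|\Psi(A_0)-\Psi(A_1)\|$, gap metric $\gamma(A_0,A_1)=\|(\mathbf i+A_0)^{-1}-(\mathbf i+A_1)^{-1}\|+\|(\mathbf i-A_0)^{-1}-(\mathbf i-A_1)^{-1}\|$. $\mathcal A$ is the $C^*$-algebra of continuous $f:\mathbb R\to\mathbb C$ for which both limits at $\pm\infty$ exist; $f(A)$ is defined by functional calculus. *)

From Stdlib Require Import Reals ClassicalEpsilon.
From Coquelicot Require Import Coquelicot.
Open Scope R_scope.

(** Vectors: real sequences indexed by nat; index j stands for the basis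
    vector e_(j+1) of the paper.  Complex sequences model the complexification. *)
Definition rseq := nat -> R.
Definition cseq := nat -> C.

Definition l2 (x : rseq) : Prop := ex_series (fun j => x j ^ 2).
Definition l2C (z : cseq) : Prop := ex_series (fun j => Cmod (z j) ^ 2).
Definition inner (x y : rseq) : R := Series (fun j => x j * y j).
Definition norm2 (x : rseq) : R := sqrt (Series (fun j => x j ^ 2)).
Definition normC (z : cseq) : R := sqrt (Series (fun j => Cmod (z j) ^ 2)).

Definition opnorm (T : rseq -> rseq) : R :=
  real (Lub_Rbar (fun r => exists x, l2 x /\ norm2 x <= 1 /\ r = norm2 (T x))).
Definition opnormC (T : cseq -> cseq) : R :=
  real (Lub_Rbar (fun r => exists z, l2C z /\ normC z <= 1 /\ r = normC (T z))).

Record op := mkop { dom : rseq -> Prop; app : rseq -> rseq }.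

(** The class S: densely defined selfadjoint (linear) operators on l^2. *)
Definition in_S (A : op) : Prop :=
  (forall x, dom A x -> l2 x /\ l2 (app A x)) /\
  (forall x y, dom A x -> dom A y -> dom A (fun j => x j + y j) /\
      app A (fun j => x j + y j) = (fun j => app A x j + app A y j)) /\
  (forall (c : R) x, dom A x -> dom A (fun j => c * x j) /\
      app A (fun j => c * x j) = (fun j => c * app A x j)) /\
  (forall x, l2 x -> forall eps, 0 < eps ->
      exists y, dom A y /\ norm2 (fun j => x j - y j) < eps) /\
  (forall x y, dom A x -> dom A y -> inner (app A x) y = inner x (app A y)) /\
  (* D(A^* ) is contained in D(A) *)
  (forall y, l2 y ->
      (exists z, l2 z /\ forall x, dom A x -> inner (app A x) y = inner x z) ->
      dom A y).

Definition re (z : cseq) : rseq := fun j => fst (z j).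
Definition im (z : cseq) : rseq := fun j => snd (z j).
Definition mkC (x y : rseq) : cseq := fun j => (x j, y j).
Definition domC (A : op) (z : cseq) : Prop := dom A (re z) /\ dom A (im z).
Definition appC (A : op) (z : cseq) : cseq := mkC (app A (re z)) (app A (im z)).

Definition is_inverse {V : Type} (L2 D : V -> Prop) (T R : V -> V) : Prop :=
  (forall v, L2 v -> D (R v) /\ T (R v) = v) /\
  (forall v, D v -> R (T v) = v).

Definition res_plus (A : op) : cseq -> cseq :=
  epsilon (inhabits (fun z => z))
    (is_inverse l2C (domC A) (fun z j => Cplus (Cmult Ci (z j)) (appC A z j))).
Definition res_minus (A : op) : cseq -> cseq :=
  epsilon (inhabits (fun z => z))
    (is_inverse l2C (domC A) (fun z j => Cminus (Cmult Ci (z j)) (appC A z j))).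

Definition gamma (A0 A1 : op) : R :=
  opnormC (fun z j => Cminus (res_plus A0 z j) (res_plus A1 z j)) +
  opnormC (fun z j => Cminus (res_minus A0 z j) (res_minus A1 z j)).

(** Riesz map Psi(A) = A (1 + A^2)^{-1/2}: B = A o Sq where Sq is a positive
    bounded selfadjoint square root of (1 + A^2)^{-1}. *)
Definition one_plus_sq (A : op) : rseq -> rseq :=
  fun x j => x j + app A (app A x) j.
Definition dom_sq (A : op) (x : rseq) : Prop := dom A x /\ dom A (app A x).
Definition is_riesz (A : op) (B : rseq -> rseq) : Prop :=
  exists Sq : rseq -> rseq,
    (forall x, l2 x -> l2 (Sq x) /\ dom A (Sq x) /\ 0 <= inner (Sq x) x) /\
    (forall x y, l2 x -> l2 y -> inner (Sq x) y = inner x (Sq y)) /\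
    is_inverse l2 (dom_sq A) (one_plus_sq A) (fun x => Sq (Sq x)) /\
    (forall x, l2 x -> B x = app A (Sq x)).
Definition Psi (A : op) : rseq -> rseq :=
  epsilon (inhabits (fun x => x)) (is_riesz A).

Definition rho (A0 A1 : op) : R := opnorm (fun x j => Psi A0 x j - Psi A1 x j).

Definition in_calA (f : R -> C) : Prop :=
  (forall x : R, continuous f x) /\
  (exists l : C, filterlim f (Rbar_locally p_infty) (locally l)) /\
  (exists l : C, filterlim f (Rbar_locally m_infty) (locally l)).

Definition diag_op (d : nat -> R) : op :=
  mkop (fun x => l2 x /\ l2 (fun j => d j * x j)) (fun x j => d j * x j).

(** Functional calculus f(A) of the diagonal selfadjoint operator diag_op d:
    multiplication by f(d j) on the complexification. *)
Definition fcalc_diag (d : nat -> R) (f : R -> C) : cseq -> cseq :=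
  fun z j => Cmult (f (d j)) (z j).

(** Eigenvalues of A_n: A_n e_k = k e_k for k <> n, A_n e_n = -n e_n
    (index j <-> e_(j+1)). *)
Definition ev (n : nat) (j : nat) : R :=
  if Nat.eqb (S j) n then - INR n else INR (S j).
Definition A_op (n : nat) : op := diag_op (ev n).

(* The operators A_n are diagonal in the basis (e_j), so every quantity reduces to
   a scalar function of their eigenvalues, and A_n differs from A_0 only on e_n,
   where the eigenvalue n is replaced by -n.  The resolvent symbols 1/(i +- l) are
   O(1/n) at both l = n and l = -n, so gamma(A_n, A_0) = O(1/n); the Riesz symbol
   l/sqrt(1+l^2) is close to +1 at n and to -1 at -n, so rho(A_n, A_0) >= 2n/sqrt(n^2+1) >= 1;
   and alpha(A_n) - alpha(A_0) is multiplication by alpha(-n) - alpha(n) = -1 on e_n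
   and by 0 elsewhere.  The only non-computational step is identifying Psi(A) for
   diagonal A: a positive symmetric square root of (1+A^2)^-1 commutes with its
   square, whose eigenvalues are simple, so it is diagonal as well. *)

From Stdlib Require Import Reals Lra Lia FunctionalExtensionality ClassicalEpsilon.
From Coquelicot Require Import Coquelicot.
Open Scope R_scope.

Lemma sum_n_single (a : nat -> R) k :
  (forall j, j <> k -> a j = 0) ->
  forall n, sum_n a n = if Nat.leb k n then a k else 0.
Proof.
  intros Ha n. induction n as [|n IH].
  - rewrite sum_O. destruct k; [reflexivity|]. apply Ha. lia.
  - rewrite sum_Sn, IH. unfold plus; simpl.
    destruct (Nat.leb_spec k n), (Nat.leb_spec k (S n)); try lia.
    + rewrite (Ha (S n)) by lia. ring.
    + replace k with (S n) by lia. ring.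
    + rewrite (Ha (S n)) by lia. ring.
Qed.

Lemma is_series_single (a : nat -> R) k :
  (forall j, j <> k -> a j = 0) -> is_series a (a k).
Proof.
  intros Ha. apply filterlim_ext_loc with (fun _ => a k).
  - exists k. intros n Hn. rewrite (sum_n_single a k Ha).
    destruct (Nat.leb_spec k n); [reflexivity | lia].
  - apply filterlim_const.
Qed.

Lemma Series_single (a : nat -> R) k :
  (forall j, j <> k -> a j = 0) -> Series a = a k.
Proof. intros Ha. now apply is_series_unique, is_series_single. Qed.

Lemma ex_series_single (a : nat -> R) k :
  (forall j, j <> k -> a j = 0) -> ex_series a.
Proof. intros Ha. exists (a k). now apply is_series_single. Qed.

Lemma ex_series_finite_support (a : nat -> R) N :
  (forall j, (N < j)%nat -> a j = 0) -> ex_series a.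
Proof.
  intros Ha. exists (sum_n a N).
  apply filterlim_ext_loc with (fun _ => sum_n a N); [|apply filterlim_const].
  exists N. intros n Hn. induction Hn as [|n Hn IH]; [reflexivity|].
  rewrite sum_Sn, <- IH, (Ha (S n)) by lia. unfold plus; simpl. symmetry. apply Rplus_0_r.
Qed.

Lemma Series_nonneg (a : nat -> R) : (forall j, 0 <= a j) -> ex_series a -> 0 <= Series a.
Proof.
  intros Ha Hex. rewrite <- (Series_single (fun _ => 0) 0) by reflexivity.
  apply Series_le; [intros j; split; [lra | apply Ha] | exact Hex].
Qed.

Lemma ex_series_dominated (a b : nat -> R) :
  (forall j, 0 <= a j <= b j) -> ex_series b -> ex_series a.
Proof.
  intros Hab Hb. apply (ex_series_le (K := R_AbsRing) (V := R_CompleteNormedModule)) with b; auto.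
  intros j. change (Rabs (a j) <= b j). rewrite Rabs_pos_eq; apply Hab.
Qed.

Lemma ex_series_scal_R (c : R) (a : nat -> R) : ex_series a -> ex_series (fun j => c * a j).
Proof. apply (ex_series_scal_l (K := R_AbsRing) (V := R_NormedModule)). Qed.

Lemma sqrt_Series_le_scaled (a b : nat -> R) c :
  0 <= c -> (forall j, 0 <= b j <= c ^ 2 * a j) -> ex_series a ->
  sqrt (Series a) <= 1 -> sqrt (Series b) <= c.
Proof.
  intros Hc Hb Ha Hsa.
  assert (Sa : Series a <= 1).
  { destruct (Rle_lt_dec (Series a) 1) as [|Hlt]; [assumption|].
    assert (sqrt 1 < sqrt (Series a)) by (apply sqrt_lt_1_alt; lra).
    rewrite sqrt_1 in *. lra. }
  assert (Sb : Series b <= c ^ 2 * Series a).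
  { rewrite <- Series_scal_l. apply Series_le; [exact Hb | now apply ex_series_scal_R]. }
  rewrite <- (sqrt_pow2 c Hc). apply sqrt_le_1_alt.
  pose proof (pow2_ge_0 c). nra.
Qed.

Lemma real_Lub_Rbar_bounds (E : R -> Prop) c a :
  (forall r, E r -> r <= c) -> E a ->
  (forall r, E r -> r <= real (Lub_Rbar E)) /\ real (Lub_Rbar E) <= c.
Proof.
  intros Hc Ha. destruct (Lub_Rbar_correct E) as [Hub Hlub].
  destruct (Lub_Rbar E) as [l| |]; simpl in *.
  - split; [exact Hub | apply (Hlub c); exact Hc].
  - exfalso. apply (Hlub c); exact Hc.
  - exfalso. exact (Hub a Ha).
Qed.

Definition e (k : nat) : rseq := fun j => if Nat.eq_dec j k then 1 else 0.
Definition eC (k : nat) : cseq := fun j => RtoC (e k j).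

Lemma e_same k : e k k = 1.
Proof. unfold e. destruct (Nat.eq_dec k k); congruence. Qed.

Lemma e_other k j : j <> k -> e k j = 0.
Proof. intros Hjk. unfold e. destruct (Nat.eq_dec j k); congruence. Qed.

Lemma Series_mult_e (f : nat -> R) k : Series (fun j => f j * e k j) = f k.
Proof.
  rewrite (Series_single _ k), e_same; [ring|].
  intros j Hj. rewrite e_other by exact Hj. ring.
Qed.

Lemma inner_e_r x k : inner x (e k) = x k.
Proof. apply Series_mult_e. Qed.

Lemma inner_e_l x k : inner (e k) x = x k.
Proof. rewrite <- (inner_e_r x k). apply Series_ext. intros; ring. Qed.

Lemma norm2_single (x : rseq) k : (forall j, j <> k -> x j = 0) -> norm2 x = Rabs (x k).
Proof.
  intros Hx. unfold norm2. rewrite (Series_single _ k).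
  - rewrite <- Rsqr_pow2. apply sqrt_Rsqr_abs.
  - intros j Hj. rewrite Hx by exact Hj. ring.
Qed.

Lemma normC_single (z : cseq) k : (forall j, j <> k -> z j = RtoC 0) -> normC z = Cmod (z k).
Proof.
  intros Hz. unfold normC. rewrite (Series_single _ k).
  - apply sqrt_pow2, Cmod_ge_0.
  - intros j Hj. rewrite Hz, Cmod_0 by exact Hj. ring.
Qed.

Lemma l2_e k : l2 (e k).
Proof. apply (ex_series_single _ k). intros j Hj. rewrite e_other by exact Hj. ring. Qed.

Lemma l2C_eC k : l2C (eC k).
Proof.
  apply (ex_series_single _ k). intros j Hj. unfold eC.
  rewrite e_other, Cmod_0 by exact Hj. ring.
Qed.

Lemma l2_dominated (x : rseq) (b : nat -> R) :
  (forall j, Rabs (x j) <= b j) -> ex_series (fun j => b j ^ 2) -> l2 x.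
Proof.
  intros Hx Hb. apply ex_series_dominated with (fun j => b j ^ 2); [|exact Hb].
  intros j. split; [apply pow2_ge_0|].
  rewrite <- (pow2_abs (x j)). pose proof (Rabs_pos (x j)). specialize (Hx j). nra.
Qed.

Lemma l2_le (x y : rseq) : (forall j, Rabs (x j) <= Rabs (y j)) -> l2 y -> l2 x.
Proof.
  intros Hxy Hy. apply l2_dominated with (fun j => Rabs (y j)); [exact Hxy|].
  apply ex_series_ext with (fun j => y j ^ 2); [|exact Hy]. intros j. now rewrite pow2_abs.
Qed.

Lemma l2_of_l2C (x : rseq) (z : cseq) : (forall j, Rabs (x j) <= Cmod (z j)) -> l2C z -> l2 x.
Proof. apply l2_dominated. Qed.

Lemma l2_ext x y : (forall j, x j = y j) -> l2 x -> l2 y.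
Proof. intros Hxy. apply ex_series_ext. intros j. now rewrite Hxy. Qed.

Lemma l2_plus x y : l2 x -> l2 y -> l2 (fun j => x j + y j).
Proof.
  intros Hx Hy.
  apply ex_series_dominated with (fun j => 2 * x j ^ 2 + 2 * y j ^ 2).
  - intros j. split; [apply pow2_ge_0|]. pose proof (pow2_ge_0 (x j - y j)). nra.
  - apply ex_series_ext with (fun j => plus (scal 2 (x j ^ 2)) (scal 2 (y j ^ 2))); [reflexivity|].
    apply (ex_series_plus (K := R_AbsRing) (V := R_NormedModule));
      now apply ex_series_scal_R.
Qed.

Lemma l2_scal c x : l2 x -> l2 (fun j => c * x j).
Proof.
  intros Hx. apply ex_series_ext with (fun j => c ^ 2 * x j ^ 2).
  - intros j. simpl. ring.
  - now apply ex_series_scal_R.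
Qed.

Lemma l2_mult_bounded (m : nat -> R) x :
  (forall j, Rabs (m j) <= 1) -> l2 x -> l2 (fun j => m j * x j).
Proof.
  intros Hm. apply l2_le. intros j. rewrite Rabs_mult.
  specialize (Hm j). pose proof (Rabs_pos (x j)). nra.
Qed.

Lemma truncation_approx x : l2 x -> forall eps, 0 < eps ->
  exists N, norm2 (fun j => x j - (if Nat.leb j N then x j else 0)) < eps.
Proof.
  intros Hx eps Heps.
  assert (Hlim : is_lim_seq (sum_n (fun j => x j ^ 2)) (Series (fun j => x j ^ 2)))
    by exact (Series_correct _ Hx).
  apply is_lim_seq_spec in Hlim.
  assert (Heps2 : 0 < eps ^ 2) by nra.
  destruct (Hlim (mkposreal _ Heps2)) as [N HN]. cbn [pos] in HN.
  specialize (HN N (le_n N)). apply Rabs_def2 in HN.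
  exists N.
  assert (Htail : Series (fun j => (x j - (if Nat.leb j N then x j else 0)) ^ 2)
                  = Series (fun k => x (S N + k)%nat ^ 2)).
  { rewrite (Series_incr_n_aux _ (S N)).
    - apply Series_ext. intros k. destruct (Nat.leb_spec (S N + k) N); [lia | ring].
    - intros k Hk. destruct (Nat.leb_spec k N); [ring | lia]. }
  assert (Hsplit := Series_incr_n _ (S N) ltac:(lia) Hx). cbn [Nat.pred] in Hsplit.
  rewrite <- sum_n_Reals in Hsplit.
  unfold norm2. rewrite Htail.
  destruct (Rle_lt_dec (Series (fun k => x (S N + k)%nat ^ 2)) 0) as [Hneg | Hpos].
  - rewrite sqrt_neg_0 by exact Hneg. exact Heps.
  - rewrite <- (sqrt_pow2 eps) by lra. apply sqrt_lt_1_alt. lra.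
Qed.

Lemma in_S_diag (d : nat -> R) : in_S (diag_op d).
Proof.
  unfold in_S, diag_op; simpl.
  split; [|split; [|split; [|split; [|split]]]].
  - intros x Hx. exact Hx.
  - intros x y [Hx Hdx] [Hy Hdy]. split; [split|].
    + now apply l2_plus.
    + apply l2_ext with (fun j => d j * x j + d j * y j); [intros; ring | now apply l2_plus].
    + apply functional_extensionality. intros j. ring.
  - intros c x [Hx Hdx]. split; [split|].
    + now apply l2_scal.
    + apply l2_ext with (fun j => c * (d j * x j)); [intros; ring | now apply l2_scal].
    + apply functional_extensionality. intros j. ring.
  - intros x Hx eps Heps. destruct (truncation_approx x Hx eps Heps) as [N HN].
    assert (Htrunc : forall j, (N < j)%nat -> (if Nat.leb j N then x j else 0) = 0)
      by (intros j Hj; destruct (Nat.leb_spec j N); [lia | reflexivity]).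
    exists (fun j => if Nat.leb j N then x j else 0). split; [|exact HN].
    split; apply ex_series_finite_support with N; intros j Hj; rewrite Htrunc by exact Hj; ring.
  - intros x y _ _. unfold inner. apply Series_ext. intros j. ring.
  - intros y Hy [z [Hz Hadj]]. split; [exact Hy|].
    apply l2_ext with z; [|exact Hz]. intros k.
    assert (Hek : l2 (e k) /\ l2 (fun j => d j * e k j)).
    { split; [apply l2_e|].
      apply (ex_series_single _ k). intros j Hj. rewrite e_other by exact Hj. ring. }
    specialize (Hadj (e k) Hek).
    rewrite inner_e_l in Hadj.
    unfold inner in Hadj.
    rewrite (Series_ext _ (fun j => (d j * y j) * e k j)) in Hadj by (intros; ring).
    fold (inner (fun j => d j * y j) (e k)) in Hadj. rewrite inner_e_r in Hadj. lra.
Qed.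

Lemma opnorm_mult (T : rseq -> rseq) (m : nat -> R) c :
  0 <= c -> (forall j, Rabs (m j) <= c) ->
  (forall x, l2 x -> T x = fun j => m j * x j) ->
  opnorm T <= c /\ (forall k, Rabs (m k) <= opnorm T).
Proof.
  intros Hc Hm HT.
  set (E := fun r => exists x, l2 x /\ norm2 x <= 1 /\ r = norm2 (T x)).
  assert (Hub : forall r, E r -> r <= c).
  { intros r [x [Hx [Hx1 ->]]]. rewrite (HT x Hx).
    apply (sqrt_Series_le_scaled (fun j => x j ^ 2)); [exact Hc | | exact Hx | exact Hx1].
    intros j. split; [apply pow2_ge_0|]. rewrite Rpow_mult_distr.
    apply Rmult_le_compat_r; [apply pow2_ge_0|].
    rewrite <- (pow2_abs (m j)). pose proof (Rabs_pos (m j)). specialize (Hm j). nra. }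
  assert (Hek : forall k, E (Rabs (m k))).
  { intros k. exists (e k). split; [apply l2_e|]. split.
    - rewrite (norm2_single _ k), e_same, Rabs_R1 by exact (e_other k). lra.
    - rewrite (HT _ (l2_e k)), (norm2_single _ k), e_same, Rmult_1_r; [reflexivity|].
      intros j Hj. rewrite e_other by exact Hj. ring. }
  destruct (real_Lub_Rbar_bounds E c _ Hub (Hek 0%nat)) as [Hle Hlub].
  split; [exact Hlub | intros k; exact (Hle _ (Hek k))].
Qed.

Lemma opnormC_mult (T : cseq -> cseq) (m : nat -> C) c :
  0 <= c -> (forall j, Cmod (m j) <= c) ->
  (forall z, l2C z -> T z = fun j => Cmult (m j) (z j)) ->
  opnormC T <= c /\ (forall k, Cmod (m k) <= opnormC T).
Proof.
  intros Hc Hm HT.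
  set (E := fun r => exists z, l2C z /\ normC z <= 1 /\ r = normC (T z)).
  assert (Hub : forall r, E r -> r <= c).
  { intros r [z [Hz [Hz1 ->]]]. rewrite (HT z Hz).
    apply (sqrt_Series_le_scaled (fun j => Cmod (z j) ^ 2)); [exact Hc | | exact Hz | exact Hz1].
    intros j. split; [apply pow2_ge_0|]. rewrite Cmod_mult, Rpow_mult_distr.
    apply Rmult_le_compat_r; [apply pow2_ge_0|].
    pose proof (Cmod_ge_0 (m j)). specialize (Hm j). nra. }
  assert (HeCk : forall j k, j <> k -> eC k j = RtoC 0)
    by (intros j k Hjk; unfold eC; now rewrite e_other).
  assert (Hek : forall k, E (Cmod (m k))).
  { intros k. exists (eC k). split; [apply l2C_eC|]. split.
    - rewrite (normC_single _ k) by (intros j; apply HeCk).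
      unfold eC. rewrite e_same, Cmod_1. lra.
    - rewrite (HT _ (l2C_eC k)), (normC_single _ k).
      + unfold eC. rewrite e_same, Cmult_1_r. reflexivity.
      + intros j Hj. rewrite HeCk by exact Hj. apply Cmult_0_r. }
  destruct (real_Lub_Rbar_bounds E c _ Hub (Hek 0%nat)) as [Hle Hlub].
  split; [exact Hlub | intros k; exact (Hle _ (Hek k))].
Qed.

Lemma Cmod_ge1_neq0 (w : C) : 1 <= Cmod w -> w <> RtoC 0.
Proof. intros Hw E. rewrite E, Cmod_0 in Hw. lra. Qed.

Lemma inverse_mult_diag (d : nat -> R) (w : nat -> C) (T : cseq -> cseq) :
  (forall j, 1 <= Cmod (w j)) -> (forall j, Rabs (d j) <= Cmod (w j)) ->
  (forall z, T z = fun j => Cmult (w j) (z j)) ->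
  (exists Inv, is_inverse l2C (domC (diag_op d)) T Inv) /\
  (forall Inv, is_inverse l2C (domC (diag_op d)) T Inv ->
     forall z, l2C z -> Inv z = fun j => Cmult (Cinv (w j)) (z j)).
Proof.
  intros Hw1 Hwd HT.
  set (Q := fun (z : cseq) j => Cmult (Cinv (w j)) (z j)).
  assert (HwQ : forall z j, Cmod (w j) * Cmod (Q z j) = Cmod (z j)).
  { intros z j. rewrite <- Cmod_mult. unfold Q.
    rewrite Cmult_assoc, Cinv_r, Cmult_1_l by now apply Cmod_ge1_neq0. reflexivity. }
  assert (HQ : forall z j, Cmod (Q z j) <= Cmod (z j) /\ Rabs (d j) * Cmod (Q z j) <= Cmod (z j)).
  { intros z j. rewrite <- (HwQ z j). specialize (Hw1 j). specialize (Hwd j).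
    pose proof (Cmod_ge_0 (Q z j)). split; nra. }
  assert (Hcoord : forall u : C, Rabs (fst u) <= Cmod u /\ Rabs (snd u) <= Cmod u).
  { intros u. pose proof (Rmax_Cmod u). split.
    - eapply Rle_trans; [apply Rmax_l | eassumption].
    - eapply Rle_trans; [apply Rmax_r | eassumption]. }
  assert (HQdom : forall z, l2C z -> domC (diag_op d) (Q z)).
  { intros z Hz. unfold domC, diag_op, re, im; cbn [dom].
    split; split; apply l2_of_l2C with z; try exact Hz; intros j;
      destruct (HQ z j), (Hcoord (Q z j)); try rewrite Rabs_mult;
      pose proof (Rabs_pos (d j)); nra. }
  assert (HTQ : forall z, T (Q z) = z).
  { intros z. rewrite HT. apply functional_extensionality. intros j. unfold Q.
    rewrite Cmult_assoc, Cinv_r, Cmult_1_l by now apply Cmod_ge1_neq0. reflexivity. }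
  split.
  - exists Q. split.
    + intros z Hz. split; [now apply HQdom | apply HTQ].
    + intros z _. rewrite HT. apply functional_extensionality. intros j. unfold Q.
      rewrite Cmult_assoc, Cinv_l, Cmult_1_l by now apply Cmod_ge1_neq0. reflexivity.
  - intros Inv [_ HRT] z Hz. change (Inv z = Q z).
    pose proof (HRT (Q z) (HQdom z Hz)) as HRQ. rewrite HTQ in HRQ. exact HRQ.
Qed.

Lemma sqrt_sq_plus_one_ge a : 1 <= sqrt (a ^ 2 + 1) /\ Rabs a <= sqrt (a ^ 2 + 1).
Proof.
  pose proof (pow2_ge_0 a). split.
  - apply Rle_trans with (sqrt 1); [rewrite sqrt_1; lra | apply sqrt_le_1_alt; lra].
  - rewrite <- (sqrt_pow2 (Rabs a)) by apply Rabs_pos. rewrite pow2_abs.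
    apply sqrt_le_1_alt. lra.
Qed.

Lemma Cmod_Ci_plus a : Cmod (Cplus Ci (RtoC a)) = sqrt (a ^ 2 + 1).
Proof. unfold Cmod, Cplus, Ci, RtoC; simpl. f_equal. ring. Qed.

Lemma Cmod_Ci_minus a : Cmod (Cminus Ci (RtoC a)) = sqrt (a ^ 2 + 1).
Proof. unfold Cmod, Cminus, Cplus, Copp, Ci, RtoC; simpl. f_equal. ring. Qed.

Lemma res_plus_diag d z : l2C z ->
  res_plus (diag_op d) z = fun j => Cmult (Cinv (Cplus Ci (RtoC (d j)))) (z j).
Proof.
  intros Hz.
  assert (HT : forall u : cseq, (fun j => Cplus (Cmult Ci (u j)) (appC (diag_op d) u j))
                              = fun j => Cmult (Cplus Ci (RtoC (d j))) (u j)).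
  { intros u. apply functional_extensionality. intros j.
    unfold appC, mkC, re, im; simpl. destruct (u j) as [p q].
    unfold Cplus, Cmult, Ci, RtoC; simpl. f_equal; ring. }
  destruct (inverse_mult_diag d (fun j => Cplus Ci (RtoC (d j)))
              (fun u j => Cplus (Cmult Ci (u j)) (appC (diag_op d) u j))) as [Hex Huniq];
    [intros j; rewrite Cmod_Ci_plus; apply sqrt_sq_plus_one_ge .. | exact HT |].
  exact (Huniq _ (epsilon_spec _ _ Hex) z Hz).
Qed.

Lemma res_minus_diag d z : l2C z ->
  res_minus (diag_op d) z = fun j => Cmult (Cinv (Cminus Ci (RtoC (d j)))) (z j).
Proof.
  intros Hz.
  assert (HT : forall u : cseq, (fun j => Cminus (Cmult Ci (u j)) (appC (diag_op d) u j))
                              = fun j => Cmult (Cminus Ci (RtoC (d j))) (u j)).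
  { intros u. apply functional_extensionality. intros j.
    unfold appC, mkC, re, im; simpl. destruct (u j) as [p q].
    unfold Cminus, Copp, Cplus, Cmult, Ci, RtoC; simpl. f_equal; ring. }
  destruct (inverse_mult_diag d (fun j => Cminus Ci (RtoC (d j)))
              (fun u j => Cminus (Cmult Ci (u j)) (appC (diag_op d) u j))) as [Hex Huniq];
    [intros j; rewrite Cmod_Ci_minus; apply sqrt_sq_plus_one_ge .. | exact HT |].
  exact (Huniq _ (epsilon_spec _ _ Hex) z Hz).
Qed.

Lemma Cmod_Cminus_le (u v : C) : Cmod (Cminus u v) <= Cmod u + Cmod v.
Proof. unfold Cminus. rewrite <- (Cmod_opp v). apply Cmod_triangle. Qed.

Lemma resolvent_diff_le (a b r : R) : a = b \/ (a ^ 2 = r ^ 2 /\ b ^ 2 = r ^ 2) ->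
  Cmod (Cminus (Cinv (Cplus Ci (RtoC a))) (Cinv (Cplus Ci (RtoC b)))) <= 2 / sqrt (r ^ 2 + 1) /\
  Cmod (Cminus (Cinv (Cminus Ci (RtoC a))) (Cinv (Cminus Ci (RtoC b)))) <= 2 / sqrt (r ^ 2 + 1).
Proof.
  assert (Hpos : 0 < 2 / sqrt (r ^ 2 + 1)).
  { pose proof (sqrt_sq_plus_one_ge r). apply Rdiv_lt_0_compat; lra. }
  intros [<- | [Ha Hb]].
  - unfold Cminus. rewrite !Cplus_opp_r, Cmod_0. lra.
  - split; (eapply Rle_trans; [apply Cmod_Cminus_le|]);
      rewrite !Cmod_inv by (apply Cmod_ge1_neq0; rewrite ?Cmod_Ci_plus, ?Cmod_Ci_minus;
                            apply sqrt_sq_plus_one_ge);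
      rewrite ?Cmod_Ci_plus, ?Cmod_Ci_minus, Ha, Hb; unfold Rdiv; lra.
Qed.

Lemma gamma_diag_le (d1 d2 : nat -> R) r :
  (forall j, d1 j = d2 j \/ (d1 j ^ 2 = r ^ 2 /\ d2 j ^ 2 = r ^ 2)) ->
  0 <= gamma (diag_op d1) (diag_op d2) <= 4 / sqrt (r ^ 2 + 1).
Proof.
  intros Hd. unfold gamma.
  assert (Hc : 0 <= 2 / sqrt (r ^ 2 + 1)).
  { pose proof (sqrt_sq_plus_one_ge r). apply Rlt_le, Rdiv_lt_0_compat; lra. }
  destruct (opnormC_mult (fun z j => Cminus (res_plus (diag_op d1) z j) (res_plus (diag_op d2) z j))
              (fun j => Cminus (Cinv (Cplus Ci (RtoC (d1 j)))) (Cinv (Cplus Ci (RtoC (d2 j)))))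
              (2 / sqrt (r ^ 2 + 1))) as [Hplus Hplus0].
  { exact Hc. }
  { intros j. apply (resolvent_diff_le _ _ r (Hd j)). }
  { intros z Hz. rewrite !res_plus_diag by exact Hz.
    apply functional_extensionality. intros j. ring. }
  destruct (opnormC_mult (fun z j => Cminus (res_minus (diag_op d1) z j) (res_minus (diag_op d2) z j))
              (fun j => Cminus (Cinv (Cminus Ci (RtoC (d1 j)))) (Cinv (Cminus Ci (RtoC (d2 j)))))
              (2 / sqrt (r ^ 2 + 1))) as [Hminus Hminus0].
  { exact Hc. }
  { intros j. apply (resolvent_diff_le _ _ r (Hd j)). }
  { intros z Hz. rewrite !res_minus_diag by exact Hz.
    apply functional_extensionality. intros j. ring. }
  pose proof (Rle_trans _ _ _ (Cmod_ge_0 _) (Hplus0 0%nat)).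
  pose proof (Rle_trans _ _ _ (Cmod_ge_0 _) (Hminus0 0%nat)).
  unfold Rdiv in *. lra.
Qed.

Lemma inner_mult_nonneg (m : nat -> R) x :
  (forall j, 0 <= m j <= 1) -> l2 x -> 0 <= inner (fun j => m j * x j) x.
Proof.
  intros Hm Hx. unfold inner.
  assert (Hterm : forall j, m j * x j * x j = m j * x j ^ 2) by (intros; ring).
  apply Series_nonneg.
  - intros j. rewrite Hterm. apply Rmult_le_pos; [apply Hm | apply pow2_ge_0].
  - apply ex_series_dominated with (fun j => x j ^ 2); [|exact Hx].
    intros j. rewrite Hterm. specialize (Hm j). pose proof (pow2_ge_0 (x j)). split; nra.
Qed.

Definition riesz_weight (a : R) : R := / sqrt (a ^ 2 + 1).

Lemma riesz_weight_spec a :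
  0 < riesz_weight a /\ riesz_weight a <= 1 /\ Rabs (a * riesz_weight a) <= 1 /\
  riesz_weight a ^ 2 * (a ^ 2 + 1) = 1.
Proof.
  unfold riesz_weight. destruct (sqrt_sq_plus_one_ge a) as [H1 Ha].
  assert (Hs : sqrt (a ^ 2 + 1) * sqrt (a ^ 2 + 1) = a ^ 2 + 1)
    by (apply sqrt_sqrt; pose proof (pow2_ge_0 a); lra).
  split; [|split; [|split]].
  - apply Rinv_0_lt_compat. lra.
  - apply Rle_trans with (/ 1); [apply Rinv_le_contravar; lra | rewrite Rinv_1; lra].
  - rewrite Rabs_mult, Rabs_inv, (Rabs_pos_eq (sqrt _)) by lra.
    apply Rmult_le_reg_r with (sqrt (a ^ 2 + 1)); [lra|].
    rewrite Rmult_assoc, Rinv_l by lra. lra.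
  - set (s := sqrt (a ^ 2 + 1)) in *. rewrite <- Hs. field. lra.
Qed.

Lemma riesz_weight_ge_half a : 1 <= a -> 1 <= 2 * (a * riesz_weight a).
Proof.
  intros Ha. unfold riesz_weight.
  assert (Hs0 : 0 < sqrt (a ^ 2 + 1)) by (pose proof (sqrt_sq_plus_one_ge a); lra).
  assert (Hs : sqrt (a ^ 2 + 1) <= 2 * a)
    by (rewrite <- (sqrt_pow2 (2 * a)) by lra; apply sqrt_le_1_alt; nra).
  apply Rmult_le_reg_r with (sqrt (a ^ 2 + 1)); [exact Hs0|].
  replace (2 * (a * / sqrt (a ^ 2 + 1)) * sqrt (a ^ 2 + 1)) with (2 * a) by (field; lra).
  lra.
Qed.

Lemma riesz_weight_sq_inj a b : a ^ 2 <> b ^ 2 -> riesz_weight a ^ 2 <> riesz_weight b ^ 2.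
Proof.
  intros Hab E. destruct (riesz_weight_spec a) as [Ha [_ [_ Ha1]]].
  destruct (riesz_weight_spec b) as [_ [_ [_ Hb1]]].
  rewrite <- E in Hb1. apply Hab.
  assert (riesz_weight a ^ 2 * (a ^ 2 - b ^ 2) = 0) by lra.
  apply Rmult_integral in H as [H | H]; [|lra].
  pose proof (pow_lt _ 2 Ha). lra.
Qed.

Lemma is_riesz_diag d : is_riesz (diag_op d) (fun x j => d j * (riesz_weight (d j) * x j)).
Proof.
  set (w := fun j => riesz_weight (d j)).
  assert (Hw : forall j, 0 < w j /\ w j <= 1 /\ Rabs (d j * w j) <= 1 /\ w j ^ 2 * (d j ^ 2 + 1) = 1)
    by (intros j; apply riesz_weight_spec).
  assert (Hw1 : forall j, Rabs (w j) <= 1)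
    by (intros j; destruct (Hw j) as [? [? _]]; rewrite Rabs_pos_eq; lra).
  assert (Hdw : forall j, Rabs (d j * w j) <= 1) by apply Hw.
  assert (Hinv : forall j y, w j * (w j * y) + d j * (d j * (w j * (w j * y))) = y /\
                             w j * (w j * (y + d j * (d j * y))) = y).
  { intros j y. destruct (Hw j) as [_ [_ [_ H]]].
    replace (w j * (w j * y) + d j * (d j * (w j * (w j * y)))) with (w j ^ 2 * (d j ^ 2 + 1) * y) by ring.
    replace (w j * (w j * (y + d j * (d j * y)))) with (w j ^ 2 * (d j ^ 2 + 1) * y) by ring.
    rewrite H. split; ring. }
  exists (fun x j => w j * x j). split; [|split; [|split]].
  - intros x Hx. split; [|split; [split|]].
    + now apply l2_mult_bounded.
    + now apply l2_mult_bounded.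
    + apply l2_ext with (fun j => (d j * w j) * x j); [intros; ring|].
      now apply l2_mult_bounded.
    + apply inner_mult_nonneg; [|exact Hx]. intros j. destruct (Hw j) as [? [? _]]. lra.
  - intros x y _ _. unfold inner. apply Series_ext. intros j. ring.
  - split.
    + intros v Hv.
      assert (Hwv : l2 (fun j => w j * v j)) by now apply l2_mult_bounded.
      assert (Hdwv : l2 (fun j => (d j * w j) * v j)) by now apply l2_mult_bounded.
      split.
      * unfold dom_sq, diag_op; cbn [dom app]. repeat split.
        -- now apply l2_mult_bounded.
        -- apply l2_ext with (fun j => (d j * w j) * (w j * v j)); [intros; ring|].
           now apply l2_mult_bounded.
        -- apply l2_ext with (fun j => (d j * w j) * (w j * v j)); [intros; ring|].
           now apply l2_mult_bounded.
        -- apply l2_ext with (fun j => (d j * w j) * ((d j * w j) * v j)); [intros; ring|].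
           now apply l2_mult_bounded.
      * unfold one_plus_sq, diag_op; cbn [app].
        apply functional_extensionality. intros j. apply Hinv.
    + intros v _. unfold one_plus_sq, diag_op; cbn [app].
      apply functional_extensionality. intros j. apply Hinv.
  - intros x _. reflexivity.
Qed.

Lemma diag_sq_inverse d Q :
  is_inverse l2 (dom_sq (diag_op d)) (one_plus_sq (diag_op d)) Q ->
  forall v, l2 v -> Q v = fun j => riesz_weight (d j) ^ 2 * v j.
Proof.
  intros [HQ _] v Hv. destruct (HQ v Hv) as [_ E].
  apply functional_extensionality. intros j.
  apply (f_equal (fun f => f j)) in E. unfold one_plus_sq, diag_op in E; cbn [app] in E.
  destruct (riesz_weight_spec (d j)) as [_ [_ [_ H]]].
  rewrite <- E. transitivity (riesz_weight (d j) ^ 2 * (d j ^ 2 + 1) * Q v j); [rewrite H; ring | ring].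
Qed.

Section PositiveSquareRoot.

Variables (c : nat -> R) (T : rseq -> rseq).
Hypothesis c_nonneg : forall j, 0 <= c j.
Hypothesis c_sq_inj : forall j k, j <> k -> c j ^ 2 <> c k ^ 2.
Hypothesis T_l2 : forall x, l2 x -> l2 (T x).
Hypothesis T_pos : forall x, l2 x -> 0 <= inner (T x) x.
Hypothesis T_sym : forall x y, l2 x -> l2 y -> inner (T x) y = inner x (T y).
Hypothesis T_sq : forall v, l2 v -> T (T v) = fun j => c j ^ 2 * v j.

Lemma symmetric_coord x j : l2 x -> T x j = inner x (T (e j)).
Proof. intros Hx. rewrite <- T_sym, inner_e_r; [reflexivity | exact Hx | apply l2_e]. Qed.

Lemma symmetric_scal a x : l2 x -> T (fun i => a * x i) = fun i => a * T x i.
Proof.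
  intros Hx. apply functional_extensionality. intros j.
  rewrite !symmetric_coord by (try apply l2_scal; exact Hx).
  unfold inner. rewrite <- Series_scal_l. apply Series_ext. intros i. ring.
Qed.

Lemma sq_root_e k : T (e k) = fun j => c k * e k j.
Proof.
  set (u := T (e k)).
  assert (Hu : l2 u) by apply T_l2, l2_e.
  assert (HTTe : T (T (e k)) = fun j => c k ^ 2 * e k j).
  { rewrite T_sq by apply l2_e. apply functional_extensionality. intros j.
    destruct (Nat.eq_dec j k) as [-> | Hjk]; [reflexivity | rewrite e_other by exact Hjk; ring]. }
  (* u = T (e k) is an eigenvector of T^2 for its simple eigenvalue c k ^ 2 *)
  assert (Hoff : forall j, j <> k -> u j = 0).
  { intros j Hjk.
    assert (E : T (T u) j = c k ^ 2 * u j).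
    { unfold u. rewrite HTTe, symmetric_scal by apply l2_e. reflexivity. }
    rewrite T_sq in E by exact Hu.
    assert (Hdiff : (c j ^ 2 - c k ^ 2) * u j = 0) by lra.
    apply Rmult_integral in Hdiff as [H | H]; [|exact H].
    exfalso. apply (c_sq_inj j k Hjk). lra. }
  assert (Hu_e : u = fun j => u k * e k j).
  { apply functional_extensionality. intros j.
    destruct (Nat.eq_dec j k) as [-> | Hjk]; [rewrite e_same; ring|].
    rewrite Hoff, e_other by exact Hjk. ring. }
  assert (Hukk : u k * u k = c k ^ 2).
  { assert (E : T (T (e k)) k = c k ^ 2) by (rewrite HTTe, e_same; ring).
    fold u in E. rewrite Hu_e, symmetric_scal in E by apply l2_e.
    fold u in E. exact E. }
  assert (Hu_pos : 0 <= u k).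
  { pose proof (T_pos (e k) (l2_e k)) as H. rewrite inner_e_r in H. exact H. }
  assert (Huk : u k = c k).
  { specialize (c_nonneg k).
    assert (Hfac : (u k - c k) * (u k + c k) = 0) by lra.
    apply Rmult_integral in Hfac as [H | H]; lra. }
  rewrite Hu_e, Huk. reflexivity.
Qed.

Lemma sq_root_diag x : l2 x -> T x = fun j => c j * x j.
Proof.
  intros Hx. apply functional_extensionality. intros j.
  rewrite symmetric_coord, sq_root_e by exact Hx. unfold inner.
  rewrite (Series_ext _ (fun i => (c j * x i) * e j i)) by (intros; ring).
  apply Series_mult_e.
Qed.

End PositiveSquareRoot.

Lemma Psi_diag d : (forall j k, j <> k -> d j ^ 2 <> d k ^ 2) ->
  forall x, l2 x -> Psi (diag_op d) x = fun j => d j * (riesz_weight (d j) * x j).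
Proof.
  intros Hd x Hx.
  destruct (epsilon_spec (inhabits (fun x : rseq => x)) (is_riesz (diag_op d))
              (ex_intro _ _ (is_riesz_diag d))) as [Sq [Hpos [Hsym [Hinv HPsi]]]].
  fold (Psi (diag_op d)) in HPsi.
  assert (HSq : Sq x = fun j => riesz_weight (d j) * x j).
  { apply (sq_root_diag (fun j => riesz_weight (d j))); try exact Hx.
    - intros j. apply Rlt_le, riesz_weight_spec.
    - intros j k Hjk. apply riesz_weight_sq_inj, Hd, Hjk.
    - intros y Hy. apply (Hpos y Hy).
    - intros y Hy. apply (Hpos y Hy).
    - exact Hsym.
    - apply (diag_sq_inverse d), Hinv. }
  rewrite HPsi, HSq by exact Hx. reflexivity.
Qed.

Lemma rho_diag_ge d1 d2 :
  (forall j k, j <> k -> d1 j ^ 2 <> d1 k ^ 2) -> (forall j k, j <> k -> d2 j ^ 2 <> d2 k ^ 2) ->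
  forall k, Rabs (d1 k * riesz_weight (d1 k) - d2 k * riesz_weight (d2 k))
            <= rho (diag_op d1) (diag_op d2).
Proof.
  intros H1 H2. unfold rho.
  apply (opnorm_mult _ (fun j => d1 j * riesz_weight (d1 j) - d2 j * riesz_weight (d2 j)) 2).
  - lra.
  - intros j. eapply Rle_trans; [apply Rabs_triang|]. rewrite Rabs_Ropp.
    pose proof (proj1 (proj2 (proj2 (riesz_weight_spec (d1 j))))).
    pose proof (proj1 (proj2 (proj2 (riesz_weight_spec (d2 j))))). lra.
  - intros x Hx. rewrite (Psi_diag d1 H1 x Hx), (Psi_diag d2 H2 x Hx).
    apply functional_extensionality. intros j. ring.
Qed.

Lemma ev_other n j : S j <> n -> ev n j = ev 0 j.
Proof. intros Hjn. unfold ev. destruct (Nat.eqb_spec (S j) n); [congruence | reflexivity]. Qed.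

Lemma ev_flip n j : S j = n -> ev n j = - INR n /\ ev 0 j = INR n.
Proof. intros <-. unfold ev. rewrite Nat.eqb_refl. split; reflexivity. Qed.

Lemma ev_sq n j : ev n j ^ 2 = INR (S j) ^ 2.
Proof. unfold ev. destruct (Nat.eqb_spec (S j) n) as [<- | _]; [ring | reflexivity]. Qed.

Lemma ev_sq_inj n j k : j <> k -> ev n j ^ 2 <> ev n k ^ 2.
Proof.
  intros Hjk E. rewrite !ev_sq in E. apply Hjk.
  pose proof (pos_INR (S j)). pose proof (pos_INR (S k)).
  assert (Hjk' : INR (S j) = INR (S k)) by nra.
  apply INR_eq in Hjk'. lia.
Qed.

Lemma ev_cases n j : ev n j = ev 0 j \/ (ev n j ^ 2 = INR n ^ 2 /\ ev 0 j ^ 2 = INR n ^ 2).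
Proof.
  destruct (Nat.eq_dec (S j) n) as [Hjn | Hjn].
  - right. destruct (ev_flip n j Hjn) as [-> ->]. split; ring.
  - left. now apply ev_other.
Qed.

Lemma is_lim_seq_inv_sqrt_INR : is_lim_seq (fun n => / sqrt (INR n ^ 2 + 1)) 0.
Proof.
  apply (is_lim_seq_inv _ p_infty); [|discriminate].
  apply is_lim_seq_le_p_loc with INR; [|exact is_lim_seq_INR].
  exists 0%nat. intros n _.
  rewrite <- (Rabs_pos_eq (INR n)) at 1 by apply pos_INR. apply sqrt_sq_plus_one_ge.
Qed.

Lemma gamma_A_lim :
  is_lim_seq (fun n => gamma (A_op n) (A_op 0)) 0 /\ is_lim_seq (fun n => gamma (A_op 0) (A_op n)) 0.
Proof.
  assert (Hlim : is_lim_seq (fun n => 4 * / sqrt (INR n ^ 2 + 1)) 0).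
  { replace (Finite 0) with (Rbar_mult 4 0) by (simpl; f_equal; ring).
    apply is_lim_seq_scal_l, is_lim_seq_inv_sqrt_INR. }
  split; apply is_lim_seq_le_le with (fun _ => 0) (fun n => 4 * / sqrt (INR n ^ 2 + 1));
    try apply is_lim_seq_const; try exact Hlim; intros n; apply gamma_diag_le; intros j.
  - apply ev_cases.
  - destruct (ev_cases n j) as [E | [E1 E2]]; [left; symmetry; exact E | right; split; assumption].
Qed.

Lemma rho_A_ge1 n : (1 <= n)%nat -> 1 <= rho (A_op n) (A_op 0) /\ 1 <= rho (A_op 0) (A_op n).
Proof.
  intros Hn.
  destruct (ev_flip n (pred n) ltac:(lia)) as [Ev_n Ev_0].
  assert (Hgap : 1 <= Rabs (ev n (pred n) * riesz_weight (ev n (pred n))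
                            - ev 0 (pred n) * riesz_weight (ev 0 (pred n)))).
  { rewrite Ev_n, Ev_0.
    replace (riesz_weight (- INR n)) with (riesz_weight (INR n))
      by (unfold riesz_weight; f_equal; f_equal; ring).
    replace (- INR n * riesz_weight (INR n) - INR n * riesz_weight (INR n))
      with (- (2 * (INR n * riesz_weight (INR n)))) by ring.
    assert (Hn1 : 1 <= INR n) by (apply (le_INR 1); exact Hn).
    pose proof (riesz_weight_ge_half _ Hn1).
    rewrite Rabs_Ropp, Rabs_pos_eq; lra. }
  split.
  - eapply Rle_trans; [exact Hgap | apply rho_diag_ge; apply ev_sq_inj].
  - eapply Rle_trans; [|apply rho_diag_ge; apply ev_sq_inj].
    rewrite Rabs_minus_sym. exact Hgap.
Qed.

Lemma fcalc_A_diff_opnormC (alpha : R -> C) n : (1 <= n)%nat ->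
  alpha (INR n) = RtoC 1 -> alpha (- INR n) = RtoC 0 ->
  opnormC (fun z j => Cminus (fcalc_diag (ev n) alpha z j) (fcalc_diag (ev 0) alpha z j)) = 1.
Proof.
  intros Hn Hpos Hneg.
  assert (Hjump : Cmod (Cminus (alpha (- INR n)) (alpha (INR n))) = 1).
  { rewrite Hpos, Hneg. replace (Cminus (RtoC 0) (RtoC 1)) with (Copp (RtoC 1)) by ring.
    rewrite Cmod_opp. apply Cmod_1. }
  destruct (opnormC_mult
              (fun z j => Cminus (fcalc_diag (ev n) alpha z j) (fcalc_diag (ev 0) alpha z j))
              (fun j => Cminus (alpha (ev n j)) (alpha (ev 0 j))) 1) as [Hle Hge].
  - lra.
  - intros j. destruct (Nat.eq_dec (S j) n) as [Hjn | Hjn].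
    + destruct (ev_flip n j Hjn) as [-> ->]. lra.
    + rewrite ev_other by exact Hjn. unfold Cminus. rewrite Cplus_opp_r, Cmod_0. lra.
  - intros z _. apply functional_extensionality. intros j. unfold fcalc_diag. ring.
  - specialize (Hge (pred n)). destruct (ev_flip n (pred n) ltac:(lia)) as [E1 E2].
    rewrite E1, E2, Hjump in Hge. lra.
Qed.

Lemma INR_eventually_gt M : exists N, forall n, (N <= n)%nat -> M < INR n.
Proof. exact (proj2 (is_lim_seq_spec INR p_infty) is_lim_seq_INR M). Qed.

Theorem mainTheorem4 :
  (forall n : nat, in_S (A_op n)) /\
  is_lim_seq (fun n => gamma (A_op n) (A_op 0)) 0 /\
  ~ is_lim_seq (fun n => rho (A_op n) (A_op 0)) 0 /\
  (forall alpha : R -> C, in_calA alpha ->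
     (exists M : R, forall l : R, M <= l -> alpha l = RtoC 1) ->
     (exists M : R, forall l : R, l <= M -> alpha l = RtoC 0) ->
     exists N : nat, forall n : nat, (N <= n)%nat ->
       opnormC (fun z j => Cminus (fcalc_diag (ev n) alpha z j)
                                  (fcalc_diag (ev 0) alpha z j)) = 1) /\
  ~ (forall A : op, in_S A -> forall eps : R, 0 < eps ->
       exists delta : R, 0 < delta /\
         forall B : op, in_S B -> gamma A B < delta -> rho A B < eps).
Proof.
  destruct gamma_A_lim as [Hgamma Hgamma'].
  split; [|split; [|split; [|split]]].
  - intros n. apply in_S_diag.
  - exact Hgamma.
  - intros Hrho.
    assert (H10 : Rbar_le 1 0).
    { apply (is_lim_seq_le_loc (fun _ => 1) (fun n => rho (A_op n) (A_op 0)));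
        [| apply is_lim_seq_const | exact Hrho].
      exists 1%nat. intros n Hn. apply rho_A_ge1, Hn. }
    simpl in H10. lra.
  - (* only the values of alpha at +n and -n matter, not its continuity or limits *)
    intros alpha _ [M1 HM1] [M0 HM0].
    destruct (INR_eventually_gt (Rmax 0 (Rmax M1 (- M0)))) as [N HN].
    exists N. intros n Hn. specialize (HN n Hn).
    pose proof (Rmax_l 0 (Rmax M1 (- M0))). pose proof (Rmax_r 0 (Rmax M1 (- M0))).
    pose proof (Rmax_l M1 (- M0)). pose proof (Rmax_r M1 (- M0)).
    apply fcalc_A_diff_opnormC; [| apply HM1 | apply HM0]; try lra.
    destruct n; [simpl in HN; lra | lia].
  - intros Hcont.
    destruct (Hcont (A_op 0) (in_S_diag _) (1 / 2) ltac:(lra)) as [delta [Hdelta Hclose]].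
    apply is_lim_seq_spec in Hgamma'.
    destruct (Hgamma' (mkposreal _ Hdelta)) as [N HN]. cbn [pos] in HN.
    specialize (HN (S N) (Nat.le_succ_diag_r N)). rewrite Rminus_0_r in HN.
    assert (Hsmall := Hclose (A_op (S N)) (in_S_diag _) (Rle_lt_trans _ _ _ (Rle_abs _) HN)).
    destruct (rho_A_ge1 (S N) ltac:(lia)) as [_ Hbig]. lra.
Qed.
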